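(* Let $p$ be a prime, $m$ a positive integer, $e\geq2$, and $b\ge2$ an integer. Let $1\leq i\leq p^{e-1}$ be such that $i+b\leq p^e$ and $i\leq b$. Then $d_b(\mathcal{C}_i)=i+b$.
   Context: For $0\le i\le p^e$, $\mathcal{C}_i$ denotes the cyclic code $\langle (x-1)^i\rangle\subseteq \mathbb{F}_{p^m}[x]/\langle x^{p^e}-1\rangle$, with polynomials identified with their coefficient vectors in $\mathbb{F}_{p^m}^{p^e}$. For $c\in\mathbb{F}_{p^m}^{n}$, $\pi_b(c)$ is the list of the $n$ cyclically consecutive $b$-tuples $(c_j,\dots,c_{j+b-1})$ (indices mod $n$), $d_b(c,c')=d_H(\pi_b(c),\pi_b(c'))$, and $d_b(\mathcal{C})$ is the minimum of $d_b(c,c')$ over distinct $c,c'\in\mathcal{C}$. *)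

From HB Require Import structures.
From mathcomp Require Import all_boot all_order all_algebra all_field.
Set Implicit Arguments. Unset Strict Implicit. Unset Printing Implicit Defensive.
Import GRing.Theory.
Local Open Scope ring_scope.

Definition word (F : finFieldType) (n : nat) := {ffun 'I_n -> F}.

Definition word_poly (F : finFieldType) (n : nat) (c : word F n) : {poly F} :=
  \sum_(j < n) c j *: 'X^j.

(* c belongs to the cyclic code <(x-1)^i> in F[x]/<x^n - 1>:
   c is the (reduced) residue of some multiple of (x-1)^i modulo x^n - 1. *)
Definition in_cyc_code (F : finFieldType) (n i : nat) (c : word F n) : Prop :=
  exists g : {poly F}, word_poly c = (('X - 1) ^+ i * g) %% ('X^n - 1).

Definition symb (F : finFieldType) (n b : nat) (c : word F n) (j : 'I_n)
  : {ffun 'I_b -> F} :=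
  [ffun k : 'I_b => c (insubd j ((j + k) %% n)%N)].

Definition bdist (F : finFieldType) (n b : nat) (c c' : word F n) : nat :=
  #|[set j : 'I_n | symb b c j != symb b c' j]|.

Definition min_bdist (F : finFieldType) (n b : nat) (C : word F n -> Prop)
  (d : nat) : Prop :=
  (exists c c', [/\ C c, C c', c <> c' & bdist b c c' = d]) /\
  (forall c c', C c -> C c' -> c <> c' -> (d <= bdist b c c')%N).

From HB Require Import structures.
From mathcomp Require Import all_boot all_order all_algebra all_field.
From mathcomp Require Import zify.
Set Implicit Arguments. Unset Strict Implicit. Unset Printing Implicit Defensive.
Import GRing.Theory.
Local Open Scope ring_scope.

(* A word is in the code iff (x - 1)^i divides its polynomial; since (x - 1)^i
   divides x^n - 1, the code is closed under cyclic shifts, which preserve the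
   b-weight.  A nonzero codeword of b-weight below n has a run of b zeros
   followed by a nonzero entry; shifting that entry to position 0 gives a word
   with nonzero constant term, vanishing on its last b positions, whose degree
   d satisfies i <= d < n - b.  The b windows containing position 0 and the i
   windows starting at d - i + 1, ..., d are then distinct and nonzero.  The
   codeword (x - 1)^i attains the bound i + b, as its only nonzero windows
   start at 0, ..., i or wrap around the end. *)

Lemma Xsub1_expn_pchar (R : comNzRingType) p e : p \in [pchar R] ->
  ('X - 1 : {poly R}) ^+ (p ^ e) = 'X^(p ^ e) - 1.
Proof.
move=> charRp; have charPp : p \in [pchar {poly R}] by rewrite pchar_poly.
have pe_nat : [pchar {poly R}].-nat (p ^ e)%N.
  by rewrite (eq_pnat _ (pcharf_eq charPp)) pnatX (pnat_id (pcharf_prime charRp)).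
by rewrite exprDn_pchar // exprNn_pchar // expr1n.
Qed.

Section CyclicWords.

Variables (F : finFieldType) (n' : nat).
Local Notation n := n'.+1.
Implicit Types (u v c : word F n) (q : {poly F}).

Definition cnth u (x : nat) : F := u (inord (x %% n)).

Lemma cnth_ord u (x : 'I_n) : cnth u x = u x.
Proof. by rewrite /cnth modn_small // inord_val. Qed.

Lemma cnth_modl u x y : cnth u (x %% n + y) = cnth u (x + y).
Proof. by rewrite /cnth modnDml. Qed.

Lemma cnth_addn u x : cnth u (x + n) = cnth u x.
Proof. by rewrite /cnth modnDr. Qed.

Lemma cnth_n u : cnth u n = cnth u 0.
Proof. by rewrite /cnth modnn. Qed.

Lemma symbE b u (j : 'I_n) (k : 'I_b) : symb b u j k = cnth u (j + k).
Proof.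
rewrite ffunE /cnth; congr (u _); apply: val_inj.
by rewrite /= inordK ?ltn_mod // insubdK // -topredE /= ltn_mod.
Qed.

Lemma symb_eq0 b u (j : 'I_n) k : symb b u j = 0 -> (k < b)%N -> cnth u (j + k) = 0.
Proof. by move=> uj0 kb; rewrite -(symbE u j (Ordinal kb)) uj0 ffunE. Qed.

Lemma symb_neq0 b u (j : 'I_n) k : (k < b)%N -> cnth u (j + k) != 0 -> symb b u j != 0.
Proof. by move=> kb; apply: contra => /eqP/symb_eq0->. Qed.

Definition rotw u : word F n := [ffun k : 'I_n => cnth u k.+1].

Lemma cnth_rotw u x : cnth (rotw u) x = cnth u x.+1.
Proof.
by rewrite {1}/cnth ffunE inordK ?ltn_mod // -[(x %% n).+1]addn1 cnth_modl addn1.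
Qed.

Lemma cnth_iter_rotw T u x : cnth (iter T rotw u) x = cnth u (x + T).
Proof. by elim: T x => [|T IHT] x; rewrite ?addn0 // iterS cnth_rotw IHT addSnnS. Qed.

Lemma word_polyE u : word_poly u = \poly_(j < n) cnth u j.
Proof. by rewrite poly_def; apply: eq_bigr => j _; rewrite cnth_ord. Qed.

Lemma coef_word_poly u k : (word_poly u)`_k = if (k < n)%N then cnth u k else 0.
Proof. by rewrite word_polyE coef_poly. Qed.

Lemma word_poly0 : word_poly (0 : word F n) = 0.
Proof. by rewrite /word_poly big1 // => j _; rewrite ffunE scale0r. Qed.

Lemma word_polyB u v : word_poly (u - v) = word_poly u - word_poly v.
Proof. by rewrite /word_poly -sumrB; apply: eq_bigr => j _; rewrite !ffunE scalerBl. Qed.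

Lemma size_word_poly u : (size (word_poly u) <= n)%N.
Proof. by apply/leq_sizeP => k kn; rewrite coef_word_poly ltnNge kn. Qed.

Lemma word_poly_rotw u :
  'X * word_poly (rotw u) = word_poly u + cnth u 0 *: ('X^n - 1).
Proof.
apply/polyP => -[|k]; rewrite coefXM coefD coefZ coefB coefXn coef1 !coef_word_poly.
  by rewrite mulrBr mulr0 mulr1 add0r subrr.
rewrite /= subr0 cnth_rotw.
case: (ltngtP k.+1 n) => [||->]; rewrite ?mulr0 ?addr0 ?mulr1 ?add0r //=.
by rewrite cnth_n.
Qed.

Definition bweight b u := #|[set j : 'I_n | symb b u j != 0]|.

Lemma bdist_bweight b c c' : bdist b c c' = bweight b (c - c').
Proof.
apply: eq_card => j; rewrite !inE -subr_eq0; congr (~~ (_ == 0)).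
by apply/ffunP => k; rewrite !ffunE.
Qed.

Lemma bweight_iter_rotw T b u : bweight b (iter T rotw u) = bweight b u.
Proof.
pose shift (j : 'I_n) : 'I_n := inord ((j + T) %% n).
have shift_inj : injective shift.
  move=> j j' /(congr1 val); rewrite /= !inordK ?ltn_mod // => /eqP.
  by rewrite eqn_modDr !modn_small // => /eqP /val_inj.
rewrite /bweight -[RHS](card_preimset _ shift_inj); apply: eq_card => j; rewrite !inE.
congr (~~ (_ == 0)); apply/ffunP => k.
by rewrite !symbE cnth_iter_rotw /shift inordK ?ltn_mod // cnth_modl addnAC.
Qed.

Variable i : nat.
Local Notation Xsub1i := (('X - 1 : {poly F}) ^+ i).
Hypothesis Xsub1i_dvd_Xn : Xsub1i %| 'X^n - 1.

Lemma dvdp_word_poly_rotw u : Xsub1i %| word_poly u -> Xsub1i %| word_poly (rotw u).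
Proof.
move=> dvd_u; have coprime_X : coprimep Xsub1i 'X.
  apply: coprimep_expl; rewrite -[X in coprimep _ X]subr0 -polyC0.
  by rewrite coprimep_XsubC rootE !hornerE oppr_eq0 oner_eq0.
by rewrite -(Gauss_dvdpr _ coprime_X) word_poly_rotw dvdp_add // -mul_polyC dvdp_mull.
Qed.

Lemma dvdp_word_poly_iter_rotw T u :
  Xsub1i %| word_poly u -> Xsub1i %| word_poly (iter T rotw u).
Proof. by move=> dvd_u; elim: T => //= T; apply: dvdp_word_poly_rotw. Qed.

Lemma size_word_poly_gt u : Xsub1i %| word_poly u -> word_poly u != 0 ->
  (i < size (word_poly u))%N.
Proof.
move=> dvd_u u_neq0; have := dvdp_leq u_neq0 dvd_u.
by rewrite -polyC1 size_exp_XsubC.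
Qed.

Lemma bweight_zero_tail b v : (0 < b)%N -> (i <= b)%N -> Xsub1i %| word_poly v ->
  cnth v 0 != 0 -> (forall k, (n - b <= k < n)%N -> cnth v k = 0) ->
  (i + b <= bweight b v)%N.
Proof.
move=> b_gt0 ib dvd_v v0 tail0.
have w_neq0 : word_poly v != 0.
  by apply: contraNneq v0 => w0; move: (coef_word_poly v 0); rewrite w0 coef0 ltn0Sn => <-.
set w := word_poly v in dvd_v w_neq0 *.
pose d := (size w).-1.
have i_le_d : (i <= d)%N by rewrite -ltnS prednK ?size_word_poly_gt // size_poly_gt0.
have size_w : (size w <= n - b)%N.
  apply/leq_sizeP => k bk; rewrite coef_word_poly; case: ltnP => // kn.
  by rewrite tail0 // ?bk.
have dnb : (d < n - b)%N by rewrite /d prednK ?size_poly_gt0.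
have vd : cnth v d != 0.
  by move: w_neq0; rewrite -lead_coef_eq0 lead_coefE coef_word_poly (leq_trans dnb (leq_subr b n)).
pose start k := (if k == 0 then 0 else if k < b then n - k else d + b - k)%N.
have start_lt k : (k < i + b)%N -> (start k < n)%N.
  by rewrite /start; repeat case: ifP; lia.
pose g (k : 'I_(i + b)) : 'I_n := inord (start k).
have g_inj : injective g.
  move=> k k' /(congr1 val); rewrite /= !inordK ?start_lt // => eq_start.
  apply: val_inj; move: eq_start; rewrite /start /=.
  by have := ltn_ord k; have := ltn_ord k'; repeat case: ifP; lia.
have g_supp : g @: [set: 'I_(i + b)] \subset [set j | symb b v j != 0].
  apply/subsetP => _ /imsetP[k _ ->]; rewrite inE.
  have gE : g k = start k :> nat by rewrite inordK ?start_lt.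
  have k_lt := ltn_ord k; case: (ltnP k b) => kb.
  - apply: (symb_neq0 kb); rewrite gE /start kb.
    have [-> // | _] := eqVneq (k : nat) 0%N.
    by rewrite subnK ?cnth_n //; lia.
  - apply: (symb_neq0 (k := k - b)); first by lia.
    rewrite gE /start ifN -?lt0n ?(leq_trans b_gt0 kb) // ltnNge kb /=.
    by rewrite (_ : _ + _ = d)%N //; lia.
by have := subset_leq_card g_supp; rewrite card_imset // cardsT card_ord.
Qed.

Lemma nonzero_after_zero_window b u (j : 'I_n) : u != 0 -> symb b u j = 0 ->
  exists s, [/\ (b <= s)%N, cnth u s != 0 & forall k, (0 < k <= b)%N -> cnth u (s - k) = 0].
Proof.
move=> u_neq0 uj0.
have [a ua] : exists a, u a != 0.
  apply/existsP; apply: contraNT u_neq0 => /existsPn u0.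
  by apply/eqP/ffunP => a; rewrite ffunE; apply/eqP/negPn/u0.
have ex_t : exists t, cnth u (j + b + t) != 0.
  exists ((j + b) * n' + a)%N.
  by rewrite addnA -mulnS /cnth modnMDl modn_small // inord_val.
have [t0 ut0 t0_min] := ex_minnP ex_t.
exists (j + b + t0)%N; split=> // [|k /andP[k_gt0 kb]]; first by lia.
have [t0k | kt0] := ltnP t0 k.
  by rewrite (_ : _ - k = j + (b + t0 - k))%N ?(symb_eq0 uj0) //; lia.
apply/eqP; apply: contraTT (_ : (t0 - k < t0)%N) => [ut0k|]; last by lia.
by rewrite -leqNgt t0_min // (_ : j + b + (t0 - k) = j + b + t0 - k)%N //; lia.
Qed.

Lemma bweight_ge b u : (0 < b)%N -> (i <= b)%N -> (i + b <= n)%N ->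
  Xsub1i %| word_poly u -> u != 0 -> (i + b <= bweight b u)%N.
Proof.
move=> b_gt0 ib ibn dvd_u u_neq0.
have [j /eqP uj0 | all_nz] := pickP (fun j => symb b u j == 0); last first.
  apply: leq_trans ibn _; rewrite -[X in (X <= _)%N]card_ord.
  by apply/subset_leq_card/subsetP => j _; rewrite inE all_nz.
have [s [bs us tail0]] := nonzero_after_zero_window u_neq0 uj0.
rewrite -(bweight_iter_rotw s); apply: bweight_zero_tail => //.
- exact: dvdp_word_poly_iter_rotw.
- by rewrite cnth_iter_rotw.
move=> k /andP[nbk kn]; rewrite cnth_iter_rotw.
by rewrite (_ : k + s = s - (n - k) + n)%N ?cnth_addn ?tail0 //; lia.
Qed.

Definition word_of_poly q : word F n := [ffun k : 'I_n => q`_k].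

Lemma cnth_word_of_poly q x : (x < n)%N -> cnth (word_of_poly q) x = q`_x.
Proof. by move=> xn; rewrite /cnth ffunE inordK modn_small ?ltn_mod. Qed.

Lemma word_of_polyK q : (size q <= n)%N -> word_poly (word_of_poly q) = q.
Proof.
move=> qn; apply/polyP => k; rewrite coef_word_poly.
by case: ltnP => kn; rewrite ?cnth_word_of_poly // nth_default // (leq_trans qn).
Qed.

Lemma bweight_word_of_poly b q : (bweight b (word_of_poly q) <= size q + b.-1)%N.
Proof.
pose h (k : 'I_(size q + b.-1)) : 'I_n :=
  inord (if k < size q then val k else n + size q - k.+1)%N.
rewrite /bweight -[X in (_ <= X)%N]card_ord -cardsT.
apply: leq_trans (leq_imset_card h _); apply/subset_leq_card/subsetP => j.
rewrite inE => qj_neq0; apply/imsetP.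
have [jq | qj] := ltnP j (size q).
  have jk : (j < size q + b.-1)%N by lia.
  by exists (Ordinal jk); rewrite // /h /= jq inord_val.
have bj : (n < j + b)%N.
  rewrite ltnNge; apply: contra qj_neq0 => jbn; apply/eqP/ffunP => k.
  have jkn : (j + k < n)%N by have := ltn_ord k; lia.
  by rewrite symbE cnth_word_of_poly // ffunE nth_default // (leq_trans qj) ?leq_addr.
have jk : (n + size q - j.+1 < size q + b.-1)%N by have := ltn_ord j; lia.
exists (Ordinal jk); rewrite // /h /= ifN -?leqNgt; last by have := ltn_ord j; lia.
by apply: val_inj; rewrite /= inordK; have := ltn_ord j; lia.
Qed.

Lemma in_cyc_codeP c : in_cyc_code i c <-> Xsub1i %| word_poly c.
Proof.
split=> [[g ->] | dvd_c]; first by rewrite -dvdp_mod // dvdp_mulr.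
exists (word_poly c %/ Xsub1i); rewrite mulrC divpK // modp_small //.
by rewrite -polyC1 size_XnsubC // ltnS size_word_poly.
Qed.

Theorem min_bdist_cyc_code b : (0 < b)%N -> (i <= b)%N -> (i + b <= n)%N ->
  min_bdist b (@in_cyc_code F n i) (i + b).
Proof.
move=> b_gt0 ib ibn.
have size_Xsub1i : size Xsub1i = i.+1 by rewrite -polyC1 size_exp_XsubC.
pose c := word_of_poly Xsub1i.
have c_poly : word_poly c = Xsub1i by rewrite word_of_polyK // size_Xsub1i; lia.
have c_neq0 : c != 0.
  by apply: contra_eq_neq c_poly => ->; rewrite word_poly0 eq_sym -size_poly_gt0 size_Xsub1i.
split.
- exists c, 0; split; rewrite ?in_cyc_codeP ?c_poly ?word_poly0 ?dvdp0 //; first exact/eqP.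
  apply/eqP; rewrite eqn_leq bdist_bweight subr0 bweight_ge ?c_poly // andbT.
  by rewrite (leq_trans (bweight_word_of_poly _ _)) // size_Xsub1i addSnnS prednK.
- move=> c1 c2 /in_cyc_codeP dvd_c1 /in_cyc_codeP dvd_c2 /eqP c12.
  by rewrite bdist_bweight bweight_ge ?subr_eq0 ?word_polyB ?dvdp_sub ?dvd_c1 ?dvd_c2.
Qed.

End CyclicWords.

Theorem theorem2p8 (p m e b i : nat) (F : finFieldType) :
  prime p -> (0 < m)%N -> #|F| = (p ^ m)%N ->
  (2 <= e)%N -> (2 <= b)%N ->
  (1 <= i)%N -> (i <= p ^ e.-1)%N -> (i + b <= p ^ e)%N -> (i <= b)%N ->
  min_bdist b (@in_cyc_code F (p ^ e) i) (i + b).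
Proof.
move=> p_prime _ card_F _ b_ge2 _ _ ibn ib.
have Xsub1i_dvd : ('X - 1 : {poly F}) ^+ i %| 'X^(p ^ e) - 1.
  rewrite -(Xsub1_expn_pchar e (card_finPcharP card_F p_prime)) dvdp_exp2l //.
  exact: leq_trans (leq_addr b i) ibn.
have pe_gt0 : (0 < p ^ e)%N by rewrite expn_gt0 prime_gt0.
move: ibn Xsub1i_dvd; rewrite -(prednK pe_gt0) => ibn Xsub1i_dvd.
by apply: min_bdist_cyc_code => //; apply: ltnW.
Qed.
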